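(* Let $\lambda$ be a partition with $d(\lambda)\ge3$, let $\ell=d(\lambda)-3$ and $A=\mathcal{L}(\lambda)$. Then $\mathbb{SG}(A)=\mathbb{SG}(A[\ell,\ell])$.
   Context: A partition is a finite non-increasing sequence $\lambda=(\lambda_1,\dots,\lambda_r)$ of positive integers; $()$ is the empty partition. Durfee length: $d(\lambda)=\max\{k:\lambda_k\ge k\}$. For non-negative $i,j$, $\lambda[i,j]$ is $(\lambda_{i+1}-j,\dots,\lambda_r-j)$ with all non-positive entries removed. LCTR: positions $\mathcal{L}(\mu)$; if $\mu\neq()$ the two moves go to $\mathcal{L}(\mu[1,0])$ and $\mathcal{L}(\mu[0,1])$; $\mathcal{L}(())$ is terminal. For $A=\mathcal{L}(\lambda)$, $A[i,j]=\mathcal{L}(\lambda[i,j])$. Normal play; $\mathbb{SG}(A)=\operatorname{mex}\{\mathbb{SG}(B):A\to B\}$. *)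

From mathcomp Require Import all_boot.
Set Implicit Arguments. Unset Strict Implicit. Unset Printing Implicit Defensive.

Definition is_partition (l : seq nat) : bool :=
  sorted geq l && all (fun x => 0 < x) l.

(* lambda_k, 1-indexed (0 beyond the length). *)
Definition part (l : seq nat) (k : nat) : nat := nth 0 l k.-1.

Definition durfee (l : seq nat) : nat :=
  \max_(0 <= k < (size l).+1 | k <= part l k) k.

(* lambda[i,j] = (lambda_{i+1}-j, ..., lambda_r - j) with non-positive entries removed. *)
Definition shift (l : seq nat) (i j : nat) : seq nat :=
  [seq x - j | x <- drop i l & j < x].

Definition mex (s : seq nat) : nat :=
  let fix go n k := if k is k'.+1 then (if n \in s then go n.+1 k' else n) else n in
  go 0 (size s).+1.

(* Sprague-Grundy value of LCTR position L(mu), computed with fuel. Both moves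
   from a nonempty partition strictly decrease the sum of parts, so fuel
   sumn mu suffices. *)
Fixpoint sg_fuel (n : nat) (mu : seq nat) : nat :=
  match n with
  | 0 => 0
  | n'.+1 => if mu is [::] then 0
             else mex [:: sg_fuel n' (shift mu 1 0); sg_fuel n' (shift mu 0 1)]
  end.

Definition SG (mu : seq nat) : nat := sg_fuel (sumn mu) mu.

Example ex_d : durfee [:: 5; 4; 3; 1] = 3. Proof. by rewrite /durfee unlock. Qed.
Example ex_sh : shift [:: 5; 4; 3; 1] 1 2 = [:: 2; 1]. Proof. by []. Qed.
Example ex_sg0 : SG [:: 1] = 1. Proof. by []. Qed.
Example ex_mex : mex [:: 0; 1] = 2. Proof. by []. Qed.
Example ex_sg2 : SG [:: 2; 2] = 0. Proof. by []. Qed.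

(* SG values of LCTR never exceed 2, and on a cell (i, j) of the diagram the value
   g(i, j) := SG(lambda[i, j]) satisfies g(i, j) = mex(g(i+1, j), g(i, j+1)).  For a 4 x 4
   block of cells, these equations determine the block from the 8 values just below and
   just right of it, and an exhaustive check over the 3^8 possibilities shows
   g(k, k) = g(k+1, k+1) whenever the block at (k, k) lies in the diagram.  This is the
   case for k + 4 <= d(lambda), so the diagonal can be shifted d(lambda) - 3 times. *)

From mathcomp Require Import all_boot zify.
Set Implicit Arguments. Unset Strict Implicit.

Lemma mex2_le2 a b : mex [:: a; b] <= 2.
Proof. by case: a b => [|[|[|a]]] [|[|[|b]]]. Qed.

Lemma SG_le2 mu : SG mu <= 2.
Proof. by rewrite /SG; case: (sumn mu) => [|n] //=; case: mu => // *; apply: mex2_le2. Qed.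

Definition positive_parts (s : seq nat) : bool := all (fun x => 0 < x) s.

Lemma shift_positive l i j : positive_parts (shift l i j).
Proof. by rewrite /positive_parts all_map; apply/allP => x; rewrite mem_filter /=; lia. Qed.

Lemma shift_id s : positive_parts s -> shift s 0 0 = s.
Proof.
by move=> hs; rewrite /shift drop0 (all_filterP hs) (eq_map subn0) map_id.
Qed.

Lemma shift_shift01 l i j : shift (shift l i j) 0 1 = shift l i j.+1.
Proof.
rewrite /shift drop0; elim: (drop i l) => //= x s IH.
case: (ltnP j x) => hx /=; last by rewrite ifF ?IH //; lia.
have -> : (1 < x - j) = (j.+1 < x) by lia.
by case: ifP => //= _; rewrite IH; congr (_ :: _); lia.
Qed.

Lemma shift_cell l i j : j < nth 0 l i -> shift l i j = (nth 0 l i - j) :: shift l i.+1 j.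
Proof.
move=> hj; have hi : i < size l by case: (ltnP i (size l)) hj => // hl; rewrite nth_default.
by rewrite /shift (drop_nth 0 hi) /= hj.
Qed.

Lemma sumn_shift_le s j : sumn [seq x - j | x <- s & j < x] <= sumn s.
Proof. by elim: s => //= x s IH; case: ifP => /= _; lia. Qed.

Lemma sumn_shift10_lt x s : 0 < x -> sumn (shift (x :: s) 1 0) < sumn (x :: s).
Proof. by move=> hx; have := sumn_shift_le s 0; rewrite /shift /= drop0; lia. Qed.

Lemma sumn_shift01_lt x s : 0 < x -> sumn (shift (x :: s) 0 1) < sumn (x :: s).
Proof. by move=> hx; have := sumn_shift_le s 1; rewrite /shift /=; case: ifP => /= _; lia. Qed.

Lemma sg_fuel_stable n m mu : positive_parts mu ->
  sumn mu <= n -> sumn mu <= m -> sg_fuel n mu = sg_fuel m mu.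
Proof.
elim: n m mu => [|n IH] [|m] [|x s] //= hp; have hx : 0 < x by case/andP: hp.
1,2: by lia.
move=> hn hm; have := sumn_shift10_lt s hx; have := sumn_shift01_lt s hx; rewrite /= => h01 h10.
by rewrite !(IH m) //; try exact: shift_positive; lia.
Qed.

Lemma SG_cons x s : 0 < x -> positive_parts s ->
  SG (x :: s) = mex [:: SG (shift (x :: s) 1 0); SG (shift (x :: s) 0 1)].
Proof.
move=> hx hs; rewrite {1}/SG /=.
have := sumn_shift10_lt s hx; have := sumn_shift01_lt s hx; rewrite /= => h01 h10.
case E: (x + sumn s) => [|n] /=; first by lia.
by rewrite /SG (@sg_fuel_stable n (sumn (shift (x :: s) 1 0)))
  1?(@sg_fuel_stable n (sumn (shift (x :: s) 0 1))) //; try exact: shift_positive; lia.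
Qed.

Lemma SG_shift_cell l i j : j < nth 0 l i ->
  SG (shift l i j) = mex [:: SG (shift l i.+1 j); SG (shift l i j.+1)].
Proof.
move=> hj; have hs := shift_positive l i.+1 j.
rewrite -shift_shift01 (shift_cell hj) SG_cons ?subn_gt0 //.
rewrite -(shift_cell hj) shift_shift01 {1}(shift_cell hj).
by rewrite -[shift (_ :: _) 1 0]/(shift (shift l i.+1 j) 0 0) shift_id.
Qed.

(* In a grid with [f i j = mex [:: f i.+1 j; f i j.+1]], [mex_row] computes a row from the
   row below it and the value right of it; [mex_block] lists the rows of a block, top
   first, from the row below the block and the column right of it. *)
Definition mex_row (below : seq nat) (right : nat) : seq nat :=
  foldr (fun b row => mex [:: b; head right row] :: row) [::] below.

Definition mex_block (bottom right : seq nat) : seq (seq nat) :=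
  foldr (fun r rows => mex_row (head bottom rows) r :: rows) [::] right.

Section MexGrid.
Variable f : nat -> nat -> nat.

Lemma mex_rowE i m n :
  (forall j, m <= j < m + n -> f i j = mex [:: f i.+1 j; f i j.+1]) ->
  mex_row [seq f i.+1 j | j <- iota m n] (f i (m + n)) = [seq f i j | j <- iota m n].
Proof.
elim: n m => [|n IH] m hf //=; rewrite addnS -addSn IH => [|j hj]; last by apply: hf; lia.
rewrite (hf m); last by lia.
by case: n {IH hf} => [|n] /=; rewrite ?addn0.
Qed.

Lemma mex_blockE m n c :
  (forall i j, m <= i < m + n -> j < c -> f i j = mex [:: f i.+1 j; f i j.+1]) ->
  mex_block [seq f (m + n) j | j <- iota 0 c] [seq f i c | i <- iota m n] =
  [seq [seq f i j | j <- iota 0 c] | i <- iota m n].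
Proof.
elim: n m => [|n IH] m hf //=.
rewrite -addSnnS IH => [|i j hi]; last by apply: hf; lia.
congr (_ :: _); have -> : head [seq f (m.+1 + n) j | j <- iota 0 c]
    [seq [seq f i j | j <- iota 0 c] | i <- iota m.+1 n] = [seq f m.+1 j | j <- iota 0 c].
  by case: n {IH hf} => [|n] /=; rewrite ?addn0.
by rewrite -{2}(add0n c) mex_rowE // => j hj; apply: hf; lia.
Qed.

End MexGrid.

Fixpoint words3 (n : nat) : seq (seq nat) :=
  if n is n'.+1 then [seq x :: w | x <- iota 0 3, w <- words3 n'] else [:: [::]].

Lemma mem_words3 w : all (fun x => x < 3) w -> w \in words3 (size w).
Proof.
elim: w => // x w IH /andP[hx hw].
by apply: (allpairs_f (fun x w => x :: w)); rewrite ?mem_iota ?IH.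
Qed.

Lemma mex_block4_diag : all (fun bottom => all (fun right =>
    let rows := mex_block bottom right in
    nth 0 (nth [::] rows 0) 0 == nth 0 (nth [::] rows 1) 1) (words3 4)) (words3 4).
Proof. by vm_compute. Qed.

Lemma mex_grid_diag (f : nat -> nat -> nat) : (forall i j, f i j <= 2) ->
  (forall i j, i < 4 -> j < 4 -> f i j = mex [:: f i.+1 j; f i j.+1]) ->
  f 0 0 = f 1 1.
Proof.
move=> hf2 hf.
have inW (g : nat -> nat) : (forall k, g k <= 2) -> [seq g k | k <- iota 0 4] \in words3 4.
  move=> hg; have := @mem_words3 [seq g k | k <- iota 0 4].
  by rewrite size_map size_iota; apply; apply/allP => _ /mapP[k _ ->]; apply: hg.
have /allP/(_ _ (inW _ (hf2 4)))/allP/(_ _ (inW _ (hf2^~ 4))) := mex_block4_diag.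
by rewrite (@mex_blockE f 0 4 4) => [/eqP|i j /andP[_ hi]]; last exact: hf.
Qed.

Lemma nth_sorted_geq l i k : sorted geq l -> i <= k -> nth 0 l k <= nth 0 l i.
Proof.
move=> hl hik; case: (ltnP k (size l)) => hk; last by rewrite nth_default.
have geq_trans : transitive geq by move=> a b c /=; lia.
by apply: (sorted_leq_nth geq_trans (@leqnn) 0 hl) => //; rewrite inE; lia.
Qed.

Lemma SG_shift_diag l k : sorted geq l -> k + 3 < nth 0 l (k + 3) ->
  SG (shift l k k) = SG (shift l k.+1 k.+1).
Proof.
move=> hl hk; have := @mex_grid_diag (fun i j => SG (shift l (k + i) (k + j))).
rewrite !addn0 !addn1; apply=> [i j|i j hi hj]; first exact: SG_le2.
rewrite !addnS; apply: SG_shift_cell.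
by have := @nth_sorted_geq l (k + i) (k + 3) hl; lia.
Qed.

Lemma SG_shift_diag_iter l n : sorted geq l -> n + 2 < nth 0 l (n + 2) ->
  SG (shift l 0 0) = SG (shift l n n).
Proof.
move=> hl hn; elim: n hn => // n IH hn.
rewrite IH; last by have := @nth_sorted_geq l (n + 2) (n.+1 + 2) hl; lia.
by apply: SG_shift_diag; rewrite // addSnnS in hn.
Qed.

Lemma durfee_le_part l : durfee l <= part l (durfee l).
Proof.
by apply: (big_ind (fun k => k <= part l k)) => // x y hx hy; rewrite /maxn; case: ifP.
Qed.

Theorem mainTheorem11 (lam : seq nat) :
  is_partition lam -> 3 <= durfee lam ->
  let l := durfee lam - 3 in
  SG lam = SG (shift lam l l).
Proof.
move=> /andP[hsorted hpos] hd l.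
rewrite -{1}(shift_id hpos); apply: SG_shift_diag_iter => //.
have -> : l + 2 = (durfee lam).-1 by rewrite /l; lia.
by have := durfee_le_part lam; rewrite /part; lia.
Qed.
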